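(* Let $R$ be a ring over which every pure projective right $R$-module is a direct sum of finitely presented modules. Then every pure projective $1$-tilting right $R$-module is classical.
   Context: A module is pure projective if it is a direct summand of a direct sum of finitely presented modules. A right $R$-module $T$ is $1$-tilting if $\operatorname{pd}T\le 1$, $\operatorname{Ext}^1_R(T,T^{(\lambda)})=0$ for all cardinals $\lambda$, and there is an exact sequence $0\to R\to T_0\to T_1\to 0$ with $T_0,T_1$ direct summands of direct sums of copies of $T$. $T$ is classical if $T^{\perp}=U^{\perp}$ for some finitely presented $1$-tilting module $U$, where $X^{\perp}=\{M:\operatorname{Ext}^1_R(X,M)=0\}$. *)

(* Right R-modules are modelled as left modules over the
   converse ring R^c: for m : M and r : R, the right action m.r is r *: m. *)
From HB Require Import structures.
From mathcomp Require Import all_boot all_order all_algebra.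
Set Implicit Arguments. Unset Strict Implicit. Unset Printing Implicit Defensive.
Import GRing.Theory.
Local Open Scope ring_scope.

Notation rmod R := (lmodType (R^c)%type).

Section Modules.
Variable R : pzRingType.

(* R regarded as a right module over itself: x . r = x * r *)
Definition RR : rmod R := ((R^c)^o)%type.

Definition hom (M N : rmod R) (f : M -> N) : Prop :=
  forall (r : R^c) (x y : M), f (r *: x + y) = r *: f x + f y.

Definition ses (A B C : rmod R) (f : A -> B) (g : B -> C) : Prop :=
  [/\ hom f, hom g, injective f, (forall c, exists b, g b = c)
    & forall b, g b = 0 <-> exists a, b = f a].

Definition Ext1_zero (T M : rmod R) : Prop :=
  forall (E : rmod R) (f : M -> E) (g : E -> T), ses f g ->
    exists s : T -> E, hom s /\ forall t, g (s t) = t.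

Definition projective (P : rmod R) : Prop :=
  forall (B C : rmod R) (g : B -> C) (h : P -> C),
    hom g -> hom h -> (forall c, exists b, g b = c) ->
    exists k : P -> B, hom k /\ forall x, g (k x) = h x.

Definition pd_le1 (T : rmod R) : Prop :=
  exists (P1 P0 : rmod R) (f : P1 -> P0) (g : P0 -> T),
    projective P1 /\ projective P0 /\ ses f g.

Definition is_dsum (I : Type) (N : I -> rmod R) (M : rmod R)
    (e : forall i, N i -> M) : Prop :=
  (forall i, hom (e i)) /\
  forall (X : rmod R) (phi : forall i, N i -> X), (forall i, hom (phi i)) ->
    (exists psi : M -> X, hom psi /\ forall i x, psi (e i x) = phi i x) /\
    (forall psi psi' : M -> X, hom psi -> hom psi' ->
       (forall i x, psi (e i x) = phi i x) ->
       (forall i x, psi' (e i x) = phi i x) -> forall m, psi m = psi' m).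

Definition summand (A M : rmod R) : Prop :=
  exists (i : A -> M) (p : M -> A), [/\ hom i, hom p & forall a, p (i a) = a].

Definition fin_free (n : nat) (F : rmod R) : Prop :=
  exists e : 'I_n -> RR -> F, @is_dsum _ (fun _ : 'I_n => RR) F e.

Definition fin_pres (M : rmod R) : Prop :=
  exists (m n : nat) (F1 F0 : rmod R) (f : F1 -> F0) (g : F0 -> M),
    [/\ fin_free m F1, fin_free n F0, hom f, hom g &
        (forall y, exists x, g x = y) /\
        (forall x, g x = 0 <-> exists z, x = f z)].

Definition pure_projective (P : rmod R) : Prop :=
  exists (I : Type) (N : I -> rmod R) (M : rmod R) (e : forall i, N i -> M),
    [/\ forall i, fin_pres (N i), @is_dsum _ N M e & summand P M].

Definition dsum_fin_pres (P : rmod R) : Prop :=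
  exists (I : Type) (N : I -> rmod R) (e : forall i, N i -> P),
    (forall i, fin_pres (N i)) /\ @is_dsum _ N P e.

Definition copies (T M : rmod R) : Prop :=
  exists (I : Type) (e : I -> T -> M), @is_dsum _ (fun _ : I => T) M e.

Definition in_Add (T X : rmod R) : Prop :=
  exists M : rmod R, copies T M /\ summand X M.

Definition tilting1 (T : rmod R) : Prop :=
  [/\ pd_le1 T,
      (forall M, copies T M -> Ext1_zero T M)
    & exists (T0 T1 : rmod R) (f : RR -> T0) (g : T0 -> T1),
        [/\ in_Add T T0, in_Add T T1 & ses f g]].

Definition classical (T : rmod R) : Prop :=
  exists U : rmod R, [/\ fin_pres U, tilting1 U &
    forall M : rmod R, Ext1_zero T M <-> Ext1_zero U M].

End Modules.

(* By hypothesis T is a direct sum of finitely presented modules N_i, each of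
   projective dimension at most 1 as a summand of T.  For a finitely presented N
   with pd N <= 1, a module M lies in N^perp as soon as every element of M is in
   the image of a map from some module of N^perp (the syzygy of N is finitely
   generated and projective).  Hence the same holds for T^perp, which is in
   particular closed under direct sums.

   Let 0 -> R -> T_0 -> T_1 -> 0 come from the tilting data, T_0 being a summand
   of a direct sum C_0 of copies of T.  The image x of 1 in C_0 lies in a finite
   subsum D: D is finitely presented, pd D <= 1, xR is isomorphic to R, and D/xR
   is a summand of T_1 (+) C_0.  So U = D (+) D/xR is finitely presented and lies
   in Add T, which gives T^perp <= U^perp, pd U <= 1 and Ext(U, U^(lambda)) = 0,
   while 0 -> R -> D -> D/xR -> 0 is the required sequence.  Conversely, if
   Ext(U, M) = 0 then every y in M is the image of x under some map D -> M
   (extend r |-> y r along R -> D), and D lies in T^perp, so M lies in T^perp. *)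

From HB Require Import structures.
From mathcomp Require Import all_boot all_order all_algebra generic_quotient ring_quotient.
(* Imported after all_algebra, whose [hom] it shadows. *)
From Stdlib Require Import ClassicalEpsilon ChoiceFacts ProofIrrelevance.
From Stdlib Require List.
Set Implicit Arguments. Unset Strict Implicit. Unset Printing Implicit Defensive.
Import GRing.Theory.
Local Open Scope ring_scope.

Lemma dependent_choice (A : Type) (B : A -> Type) (P : forall a, B a -> Prop) :
  (forall a, exists b, P a b) -> exists f : forall a, B a, forall a, P a (f a).
Proof. exact: (non_dep_dep_functional_choice choice). Qed.

Definition asbool (P : Prop) : bool := if excluded_middle_informative P then true else false.

Lemma asboolP (P : Prop) : reflect P (asbool P).
Proof. by rewrite /asbool; case: excluded_middle_informative => h; constructor. Qed.

Section Homomorphisms.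
Variable R : pzRingType.
Implicit Types M N P : rmod R.

Lemma homD M N (f : M -> N) : hom f -> forall x y, f (x + y) = f x + f y.
Proof. by move=> hf x y; rewrite -[x in LHS]scale1r hf scale1r. Qed.

Lemma hom0 M N (f : M -> N) : hom f -> f 0 = 0.
Proof. by move=> hf; apply: (addIr (f 0)); rewrite -homD // !add0r. Qed.

Lemma homZ M N (f : M -> N) : hom f -> forall r x, f (r *: x) = r *: f x.
Proof. by move=> hf r x; rewrite -[r *: x]addr0 hf hom0 // addr0. Qed.

Lemma homN M N (f : M -> N) : hom f -> forall x, f (- x) = - f x.
Proof. by move=> hf x; rewrite -scaleN1r homZ // scaleN1r. Qed.

Lemma homB M N (f : M -> N) : hom f -> forall x y, f (x - y) = f x - f y.
Proof. by move=> hf x y; rewrite homD // homN. Qed.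

Lemma hom_sum M N (f : M -> N) I (s : seq I) (F : I -> M) : hom f ->
  f (\sum_(i <- s) F i) = \sum_(i <- s) f (F i).
Proof.
move=> hf; elim: s => [|a s IH]; first by rewrite !big_nil hom0.
by rewrite !big_cons homD // IH.
Qed.

Lemma hom_id M : hom (fun x : M => x). Proof. by []. Qed.

Lemma hom_comp M N P (f : M -> N) (g : N -> P) : hom f -> hom g -> hom (fun x => g (f x)).
Proof. by move=> hf hg r x y; rewrite hf hg. Qed.

Lemma hom_zero M N : hom (fun _ : M => (0 : N)).
Proof. by move=> r x y; rewrite scaler0 addr0. Qed.

Lemma hom_add M N (f g : M -> N) : hom f -> hom g -> hom (fun x => f x + g x).
Proof. by move=> hf hg r x y; rewrite hf hg scalerDr addrACA. Qed.

Lemma hom_opp M N (f : M -> N) : hom f -> hom (fun x => - f x).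
Proof. by move=> hf r x y; rewrite hf opprD scalerN. Qed.

Lemma hom_sub M N (f g : M -> N) : hom f -> hom g -> hom (fun x => f x - g x).
Proof. by move=> hf hg r x y; rewrite hf hg scalerBr opprD addrACA. Qed.

Lemma hom_fst M N : hom (fun x : M * N => x.1). Proof. by []. Qed.

Lemma hom_snd M N : hom (fun x : M * N => x.2). Proof. by []. Qed.

Lemma hom_pair M N P (f : P -> M) (g : P -> N) : hom f -> hom g -> hom (fun x => (f x, g x)).
Proof. by move=> hf hg r x y; rewrite hf hg. Qed.

Lemma hom_inl M N : hom (fun x : M => (x, 0 : N)).
Proof. by apply: hom_pair => //; apply: hom_zero. Qed.

Lemma hom_inr M N : hom (fun x : N => (0 : M, x)).
Proof. by apply: hom_pair => //; apply: hom_zero. Qed.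

Lemma hom_scaler M (x : M) : hom (fun r : RR R => (r : R^c) *: x).
Proof. by move=> a r s; rewrite scalerDl -scalerA. Qed.

Lemma RR_scale1 (r : RR R) : r = (r : R^c) *: (1 : RR R).
Proof. by rewrite /GRing.scale /= mulr1. Qed.

End Homomorphisms.

Arguments hom_id {R M}.
Arguments hom_zero {R M N}.
Arguments hom_fst {R M N}.
Arguments hom_snd {R M N}.
Arguments hom_inl {R M N}.
Arguments hom_inr {R M N}.

Section ZeroModule.
Variable R : pzRingType.

Definition zero_rmod : rmod R := {ffun 'I_0 -> RR R}.

Lemma zero_rmod_eq0 (v : zero_rmod) : v = 0.
Proof. by apply/ffunP => -[]. Qed.

End ZeroModule.

Section Submodules.
Variables (R : pzRingType) (X : rmod R).

Record submod := Submod {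
  submod_mem :> X -> Prop;
  submod0 : submod_mem 0;
  submodD : forall x y, submod_mem x -> submod_mem y -> submod_mem (x + y);
  submodZ : forall (r : R^c) x, submod_mem x -> submod_mem (r *: x) }.

Lemma submod_sum (S : submod) I (s : seq I) (F : I -> X) :
  (forall i, S (F i)) -> S (\sum_(i <- s) F i).
Proof.
move=> SF; elim: s => [|i s IH]; first by rewrite big_nil; apply: submod0.
by rewrite big_cons; apply: submodD.
Qed.

Section SubAndQuotient.
Variable S : submod.
Local Open Scope quotient_scope.

Definition submod_pred : {pred X} := fun x => asbool (S x).

Lemma submod_pred_closed : subsemimod_closed submod_pred.
Proof.
split; first split; first exact/asboolP/submod0.
  by move=> x y /asboolP Sx /asboolP Sy; apply/asboolP/submodD.
by move=> r x /asboolP Sx; apply/asboolP/submodZ.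
Qed.

HB.instance Definition _ :=
  GRing.isSubmodClosed.Build _ _ submod_pred submod_pred_closed.

Definition sub_type : Type := {x : X | submod_pred x}.
HB.instance Definition _ := [isSub for (fun x : sub_type => proj1_sig x)].
HB.instance Definition _ := [Choice of sub_type by <:].
HB.instance Definition _ := [SubChoice_isSubLmodule of sub_type by <:].
Definition sub_rmod : rmod R := sub_type.

Definition insubm x (Sx : S x) : sub_rmod := exist _ x (introT (asboolP _) Sx).

Lemma valP_submod (u : sub_rmod) : S (val u).
Proof. exact/asboolP/(valP u). Qed.

Lemma hom_val : hom (fun u : sub_rmod => val u). Proof. by []. Qed.

Definition quo_type := Quotient.quot submod_pred.
HB.instance Definition _ := GRing.Zmodule.on quo_type.

Local Notation pi := (\pi_quo_type).

Lemma pi_eqE x y : pi x = pi y <-> S (x - y).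
Proof.
split => [/eqP|Sxy]; first by rewrite -Quotient.idealrBE => /asboolP.
by apply/eqP; rewrite -Quotient.idealrBE; apply/asboolP.
Qed.

Lemma pi_add x y : pi (x + y) = pi x + pi y.
Proof. exact: Quotient.pi_add. Qed.

(* [Quotient.quot] only carries the Z-module structure; the scalar action is
   defined on representatives. *)
Definition quo_scale (r : R^c) (a : quo_type) : quo_type := pi (r *: repr a).

Lemma pi_scale r x : pi (r *: x) = quo_scale r (pi x).
Proof.
apply/pi_eqE; rewrite -scalerBr; apply/submodZ/pi_eqE.
by rewrite reprK.
Qed.

Lemma quo_scaleA a b v : quo_scale a (quo_scale b v) = quo_scale (a * b) v.
Proof. by rewrite -[v]reprK -[quo_scale b _]pi_scale -!pi_scale scalerA. Qed.

Lemma quo_scale1 : left_id 1 quo_scale.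
Proof. by move=> v; rewrite -[v]reprK -pi_scale scale1r. Qed.

Lemma quo_scaleDr : right_distributive quo_scale +%R.
Proof.
move=> r u v.
by rewrite -[u]reprK -[v]reprK -pi_add -!pi_scale -pi_add scalerDr.
Qed.

Lemma quo_scaleDl v : {morph quo_scale^~ v: a b / a + b}.
Proof. by move=> a b; rewrite -[v]reprK -!pi_scale -pi_add scalerDl. Qed.

HB.instance Definition _ := GRing.Zmodule_isLmodule.Build (R^c)%type quo_type
  quo_scaleA quo_scale1 quo_scaleDr quo_scaleDl.
Definition quo_rmod : rmod R := quo_type.

Definition quo_pi : X -> quo_rmod := pi.

Lemma hom_quo_pi : hom quo_pi.
Proof. by move=> r x y; rewrite /quo_pi pi_add pi_scale. Qed.

Lemma quo_pi_eq x y : quo_pi x = quo_pi y <-> S (x - y).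
Proof. exact: pi_eqE. Qed.

Lemma quo_pi_eq0 x : quo_pi x = 0 <-> S x.
Proof. by rewrite -(hom0 hom_quo_pi) quo_pi_eq subr0. Qed.

Lemma quo_pi_surj (a : quo_rmod) : exists x, quo_pi x = a.
Proof. by exists (repr a); rewrite /quo_pi reprK. Qed.

Lemma quo_lift (Y : rmod R) (phi : X -> Y) : hom phi -> (forall x, S x -> phi x = 0) ->
  exists psi : quo_rmod -> Y, hom psi /\ forall x, psi (quo_pi x) = phi x.
Proof.
move=> hphi phiS.
have phi_pi x : phi (repr (quo_pi x)) = phi x.
  apply/eqP; rewrite -subr_eq0 -homB //; apply/eqP/phiS/quo_pi_eq.
  by rewrite /quo_pi reprK.
exists (fun a => phi (repr a)); split => // r a b.
have [x <-] := quo_pi_surj a; have [y <-] := quo_pi_surj b.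
by rewrite -hom_quo_pi !phi_pi hphi.
Qed.

End SubAndQuotient.
End Submodules.

Arguments insubm [R X] S [x] Sx.
Arguments quo_pi [R X] S.

Section ExactSequences.
Variable R : pzRingType.
Implicit Types M N X Y E A B C U V K Q P D W F T : rmod R.

Definition eq_submod X Y (f g : X -> Y) (hf : hom f) (hg : hom g) : submod X.
Proof.
refine (@Submod _ X (fun x => f x = g x) _ _ _).
- by rewrite !hom0.
- by move=> x y fgx fgy; rewrite !(homD hf, homD hg) fgx fgy.
- by move=> r x fgx; rewrite (homZ hf) (homZ hg) fgx.
Defined.

Definition ker_submod X Y (f : X -> Y) (hf : hom f) : submod X :=
  eq_submod hf hom_zero.

Definition img_submod X Y (f : Y -> X) (hf : hom f) : submod X.
Proof.
refine (@Submod _ X (fun x => exists y, f y = x) _ _ _).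
- by exists 0; rewrite hom0.
- by move=> _ _ [x <-] [y <-]; exists (x + y); rewrite (homD hf).
- by move=> r _ [x <-]; exists (r *: x); rewrite (homZ hf).
Defined.

Definition cyclic_submod X (x : X) : submod X := img_submod (hom_scaler x).

Definition pullback_submod Y E X (phi : Y -> X) (g : E -> X) (hphi : hom phi) (hg : hom g) :
  submod (Y * E)%type := eq_submod (hom_comp hom_fst hphi) (hom_comp hom_snd hg).

Lemma ses_comp0 A B C (f : A -> B) (g : B -> C) : ses f g -> forall a, g (f a) = 0.
Proof. by case=> _ _ _ _ ex a; apply/(ex _).2; exists a. Qed.

Lemma ses_ker Q N (g : Q -> N) (hg : hom g) : (forall n, exists q, g q = n) ->
  ses (fun k : sub_rmod (ker_submod hg) => val k) g.
Proof.
move=> gsurj; split => //; first exact: val_inj.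
move=> q; split; first by move=> gq0; exists (insubm (ker_submod hg) gq0).
by case=> k ->; apply: (valP_submod k).
Qed.

Lemma exact_pair A B C A' B' C' (f : A -> B) (g : B -> C) (f' : A' -> B') (g' : B' -> C') :
  (forall b, g b = 0 <-> exists a, b = f a) -> (forall b, g' b = 0 <-> exists a, b = f' a) ->
  forall b : (B * B')%type, (g b.1, g' b.2) = 0 <-> exists a : (A * A')%type, b = (f a.1, f' a.2).
Proof.
move=> ex ex' [b b']; split.
  move=> e; move: (congr1 fst e) (congr1 snd e) => /= /ex [a ->] /ex' [a' ->].
  by exists (a, a').
case=> [[a a']] [-> ->]; apply: injective_projections => /=.
  by apply/ex; exists a.
by apply/ex'; exists a'.
Qed.

Lemma ses_pair A B C A' B' C' (f : A -> B) (g : B -> C) (f' : A' -> B') (g' : B' -> C') :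
  ses f g -> ses f' g' -> ses (fun a => (f a.1, f' a.2)) (fun b => (g b.1, g' b.2)).
Proof.
move=> [hf hg finj gsurj ex] [hf' hg' finj' gsurj' ex']; split; last exact: exact_pair.
- exact: hom_pair (hom_comp hom_fst hf) (hom_comp hom_snd hf').
- exact: hom_pair (hom_comp hom_fst hg) (hom_comp hom_snd hg').
- by move=> [x x'] [y y'] [] /finj -> /finj' ->.
by move=> [c c']; have [b <-] := gsurj c; have [b' <-] := gsurj' c'; exists (b, b').
Qed.

Lemma ses_retraction M E X (f : M -> E) (g : E -> X) (s : X -> E) :
  ses f g -> hom s -> (forall x, g (s x) = x) ->
  exists q : E -> M, [/\ hom q, forall m, q (f m) = m & forall e, f (q e) = e - s (g e)].
Proof.
move=> sfg hs gs; have [hf hg finj _ ex] := sfg.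
have: forall e, exists m, f m = e - s (g e).
  move=> e; have /ex [m ->] : g (e - s (g e)) = 0 by rewrite (homB hg) gs subrr.
  by exists m.
case/choice => q hq; exists q; split => //.
  move=> r x y; apply: finj.
  by rewrite hf !hq hg hs scalerBr opprD addrACA.
by move=> m; apply: finj; rewrite hq (ses_comp0 sfg) (hom0 hs) subr0.
Qed.

Lemma ses_pullback M E X Y (f : M -> E) (g : E -> X) (phi : Y -> X)
    (hphi : hom phi) (hg : hom g) : ses f g ->
  exists i : M -> sub_rmod (pullback_submod hphi hg), ses i (fun w => (val w).1).
Proof.
move=> sfg; have [hf _ finj gsurj ex] := sfg.
have Pf m : pullback_submod hphi hg (0, f m) by rewrite /= (hom0 hphi) (ses_comp0 sfg).
exists (fun m => insubm _ (Pf m)); split => //.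
- by move=> r x y; apply: val_inj; apply: (hom_pair hom_zero hf).
- by move=> x y /(congr1 (fun w => (val w).2)) /finj.
- move=> y; have [e ge] := gsurj (phi y).
  have Pye : pullback_submod hphi hg (y, e) by rewrite /= ge.
  by exists (insubm _ Pye).
move=> w; split; last by case=> m ->.
move=> w10; have := valP_submod w; rewrite /= w10 (hom0 hphi) => /esym /ex [m wm].
by exists m; apply: val_inj; apply: injective_projections.
Qed.

Lemma Ext1_zero_lift M E X Y (f : M -> E) (g : E -> X) (phi : Y -> X) :
  ses f g -> hom phi -> Ext1_zero Y M ->
  exists s : Y -> E, hom s /\ forall y, g (s y) = phi y.
Proof.
move=> sfg hphi extY; have hg : hom g by case: sfg.
have [i sW] := ses_pullback hphi hg sfg.
have [s [hs sK]] := extY _ _ _ sW.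
exists (fun y => (val (s y)).2); split; first by move=> r x y; rewrite hs.
by move=> y; rewrite -[in RHS](sK y); exact/esym/(valP_submod (s y)).
Qed.

Lemma Ext1_zero_summand U V M : summand U V -> Ext1_zero V M -> Ext1_zero U M.
Proof.
move=> [i [p [hi hp pi]]] extV E f g sfg.
have [s [hs gs]] := Ext1_zero_lift sfg hp extV.
exists (fun u => s (i u)); split; first exact: hom_comp.
by move=> u; rewrite gs pi.
Qed.

Lemma Ext1_zero_dsum I (N : I -> rmod R) C (e : forall i, N i -> C) M :
  is_dsum e -> (forall i, Ext1_zero (N i) M) -> Ext1_zero C M.
Proof.
move=> [he univ] extN E f g sfg; have hg : hom g by case: sfg.
have [s hs] := dependent_choice (fun i => Ext1_zero_lift sfg (he i) (extN i)).
have [[psi [hpsi psie]] _] := univ E s (fun i => (hs i).1).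
exists psi; split => // c.
have [_ uniq] := univ C e he.
apply: (uniq (fun c => g (psi c)) id) => //; first exact: hom_comp.
by move=> i x; rewrite psie (hs i).2.
Qed.

(* An extension E' of X by M' yields the extension E' (+) ker p of X by
   M = M' (+) ker p. *)
Lemma Ext1_zero_summand_r X M' M : summand M' M -> Ext1_zero X M -> Ext1_zero X M'.
Proof.
move=> [i [p [hi hp pi]]] extM E' f' g' [hf' hg' finj' gsurj' ex'].
pose W := sub_rmod (ker_submod hp).
have Pw m : ker_submod hp (m - i (p m)) by rewrite /= (homB hp) pi subrr.
pose f (m : M) : (E' * W)%type := (f' (p m), insubm _ (Pw m)).
have sfg : ses f (fun z => g' z.1).
  split => //.
  - move=> r x y; congr pair; first by rewrite hp hf'.
    by apply: val_inj; rewrite /= hp hi scalerBr opprD addrACA.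
  - by move=> r x y; rewrite /= hg'.
  - move=> x y fxy; have /finj' pxy := congr1 fst fxy.
    by have := congr1 (fun z => val z.2) fxy; rewrite /= pxy => /addIr.
  - by move=> x; have [e <-] := gsurj' x; exists (e, 0).
  move=> [e w] /=; split.
    move=> /ex' [m ->]; exists (i m + val w).
    have pw : p (val w) = 0 := valP_submod w.
    congr pair; first by rewrite (homD hp) pi pw addr0.
    by apply: val_inj; rewrite /= (homD hp) pi pw addr0 addrC addKr.
  by case=> m [-> _]; apply/ex'; exists (p m).
have [s [hs gs]] := extM _ _ _ sfg.
by exists (fun x => (s x).1); split; first by move=> r x y; rewrite hs.
Qed.

(* E below is the pushout of f and h; a retraction of M -> E gives h'. *)
Lemma Ext1_zero_extend A B C M (f : A -> B) (g : B -> C) (h : A -> M) :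
  ses f g -> Ext1_zero C M -> hom h ->
  exists h' : B -> M, hom h' /\ forall a, h' (f a) = h a.
Proof.
move=> sfg extC hh; have [hf hg finj gsurj ex] := sfg.
pose S := img_submod (hom_pair hh (hom_opp hf)).
pose pi := quo_pi S.
have hpi : hom pi := hom_quo_pi S.
have pi_fh a : pi (0, f a) = pi (h a, 0).
  apply/quo_pi_eq; exists (- a); rewrite (homN hh) (homN hf) opprK.
  by apply: injective_projections; rewrite /= ?sub0r ?subr0.
pose i (m : M) := pi (m, 0).
have hi : hom i := hom_comp hom_inl hpi.
have [p [hp pE]] : exists p : quo_rmod S -> C, hom p /\ forall z, p (pi z) = g z.2.
  apply: quo_lift; first exact: hom_comp hom_snd hg.
  by move=> _ [a <-]; rewrite /= (homN hg) (ses_comp0 sfg) oppr0.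
have sip : ses i p.
  split => //.
  - move=> x y /quo_pi_eq [a] hxy.
    have /eqP := congr1 snd hxy; rewrite /= subrr oppr_eq0 => /eqP fa0.
    have a0 : a = 0 by apply: finj; rewrite fa0 (hom0 hf).
    by apply/eqP; rewrite -subr_eq0 -[x - y](congr1 fst hxy) a0 (hom0 hh).
  - by move=> c; have [b <-] := gsurj c; exists (pi (0, b)); rewrite pE.
  move=> w; have [[m b] <-] := quo_pi_surj w; rewrite pE /=; split.
    move=> /ex [a ->]; exists (m + h a); apply/quo_pi_eq; exists (- a).
    rewrite (homN hh) (homN hf) opprK; apply: injective_projections => /=.
      by rewrite opprD addrA subrr add0r.
    by rewrite subr0.
  by case=> m' e; have := congr1 p e; rewrite /i !pE /= (hom0 hg).
have [s [hs ps]] := extC _ _ _ sip.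
have [q [hq qi _]] := ses_retraction sip hs ps.
exists (fun b => q (pi (0, b))); split; first exact: hom_comp (hom_comp hom_inr hpi) hq.
by move=> a; rewrite pi_fh qi.
Qed.

(* With k : Q -> E lifting gk, k \o fk lands in M; if h' extends it, then
   q |-> k q - f (h' q) factors through gk and splits g. *)
Lemma Ext1_zero_of_extend K Q N M (fk : K -> Q) (gk : Q -> N) :
  ses fk gk -> projective Q ->
  (forall h : K -> M, hom h -> exists h' : Q -> M, hom h' /\ forall k, h' (fk k) = h k) ->
  Ext1_zero N M.
Proof.
move=> sk projQ extend E f g sfg.
have [hfk hgk _ gksurj exk] := sk; have [hf hg finj gsurj ex] := sfg.
have [k [hk gkE]] := projQ _ _ g gk hg hgk gsurj.
have: forall x, exists m, k (fk x) = f m.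
  move=> x; have /ex [m ->] : g (k (fk x)) = 0 by rewrite gkE (ses_comp0 sk).
  by exists m.
case/choice => h hh.
have hom_h : hom h by move=> r x y; apply: finj; rewrite hf -!hh hfk hk.
have [h' [hh' h'fk]] := extend h hom_h.
have [sq hsq] := choice _ gksurj.
pose t q := k q - f (h' q).
have ht : hom t := hom_sub hk (hom_comp hh' hf).
have t_fk x : t (fk x) = 0 by rewrite /t h'fk -hh subrr.
have sE q : t (sq (gk q)) = t q.
  have /exk [x hx] : gk (sq (gk q) - q) = 0 by rewrite (homB hgk) hsq subrr.
  by apply/eqP; rewrite -subr_eq0 -(homB ht) hx t_fk.
exists (fun n => t (sq n)); split.
  by move=> r x y; rewrite -(hsq x) -(hsq y) -hgk !sE ht.
by move=> n; rewrite -(hsq n) sE /t (homB hg) gkE (ses_comp0 sfg) subr0.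
Qed.
End ExactSequences.

Section Summands.
Variable R : pzRingType.
Implicit Types A B C X : rmod R.

Lemma summand_refl X : summand X X.
Proof. by exists id, id. Qed.

Lemma summand_trans A B C : summand A B -> summand B C -> summand A C.
Proof.
move=> [i [p [hi hp pi]]] [i' [p' [hi' hp' pi']]].
exists (fun a => i' (i a)), (fun c => p (p' c)); split; try exact: hom_comp.
by move=> a; rewrite pi' pi.
Qed.

Lemma summand_pair A A' B B' :
  summand A A' -> summand B B' -> summand (A * B)%type (A' * B')%type.
Proof.
move=> [i [p [hi hp pi]]] [i' [p' [hi' hp' pi']]].
exists (fun z => (i z.1, i' z.2)), (fun z => (p z.1, p' z.2)); split.
- by apply: hom_pair; apply: hom_comp.
- by apply: hom_pair; apply: hom_comp.
- by move=> [a b] /=; rewrite pi pi'.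
Qed.

Lemma summand_fst A B : summand A (A * B)%type.
Proof. by exists (fun a => (a, 0)), fst; split => //; apply: hom_inl. Qed.

Lemma summand_snd A B : summand B (A * B)%type.
Proof. by exists (fun b => (0, b)), snd; split => //; apply: hom_inr. Qed.

End Summands.

Section Projectives.
Variable R : pzRingType.
Implicit Types M N X Y E A B C U V K Q P D W F T : rmod R.

Lemma projective_RR : projective (RR R).
Proof.
move=> B C g h hg hh gsurj; have [b hb] := gsurj (h 1).
exists (fun r : RR R => (r : R^c) *: b); split; first exact: hom_scaler.
by move=> r; rewrite (homZ hg) hb -(homZ hh) -RR_scale1.
Qed.

Lemma projective_dsum I (N : I -> rmod R) P (e : forall i, N i -> P) :
  is_dsum e -> (forall i, projective (N i)) -> projective P.
Proof.
move=> [he univ] projN B C g h hg hh gsurj.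
have [k hk] := dependent_choice (fun i =>
  projN i B C g (fun x => h (e i x)) hg (hom_comp (he i) hh) gsurj).
have [[psi [hpsi psie]] _] := univ B k (fun i => (hk i).1).
exists psi; split => // x.
have [_ uniq] := univ C (fun i x => h (e i x)) (fun i => hom_comp (he i) hh).
apply: (uniq (fun x => g (psi x)) h) => //; first exact: hom_comp.
by move=> i y; rewrite psie (hk i).2.
Qed.

Lemma projective_summand U V : summand U V -> projective V -> projective U.
Proof.
move=> [i [p [hi hp pi]]] projV B C g h hg hh gsurj.
have [k [hk gk]] := projV B C g (fun v => h (p v)) hg (hom_comp hp hh) gsurj.
exists (fun u => k (i u)); split; first exact: hom_comp.
by move=> u; rewrite gk pi.
Qed.

Lemma projective_ses A B C (f : A -> B) (g : B -> C) :
  ses f g -> projective A -> projective C -> projective B.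
Proof.
move=> sfg projA projC D D' b h hb hh bsurj; have [hf hg _ gsurj _] := sfg.
have [s [hs gs]] := projC B C g id hg hom_id gsurj.
have [q [hq _ fq]] := ses_retraction sfg hs gs.
have [kA [hkA bkA]] := projA D D' b (fun a => h (f a)) hb (hom_comp hf hh) bsurj.
have [kC [hkC bkC]] := projC D D' b (fun c => h (s c)) hb (hom_comp hs hh) bsurj.
exists (fun x => kA (q x) + kC (g x)); split.
  by apply: hom_add; apply: hom_comp.
by move=> x; rewrite (homD hb) bkA bkC -(homD hh) fq subrK.
Qed.

Lemma ses_inl_snd A C : ses (fun a : A => (a, 0 : C)) snd.
Proof.
split => //; first exact: hom_inl.
- by move=> x y [].
- by move=> c; exists (0, c).
by move=> [a c] /=; split => [->|[a' [_ ->]]] //; exists a.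
Qed.

Lemma projective_pair A C : projective A -> projective C -> projective (A * C)%type.
Proof. exact: projective_ses (ses_inl_snd A C). Qed.

Lemma projective_fin_free n F : fin_free n F -> projective F.
Proof. by case=> e de; apply: (projective_dsum de) => _; apply: projective_RR. Qed.

(* Schanuel: the pullback W of g and g' is an extension of Q by K', hence
   projective, and K is a direct summand of W because Q' is projective. *)
Lemma projective_syzygy K Q N K' Q' (f : K -> Q) (g : Q -> N) (f' : K' -> Q') (g' : Q' -> N) :
  ses f g -> ses f' g' -> projective Q -> projective Q' -> projective K' -> projective K.
Proof.
move=> sfg sfg' projQ projQ' projK'.
have [hf hg finj gsurj ex] := sfg; have [_ hg' _ gsurj' _] := sfg'.
pose S := pullback_submod hg hg'.
have [i sW] := ses_pullback hg hg' sfg'.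
have projW : projective (sub_rmod S) := projective_ses sW projK' projQ.
have snd_surj q' : exists w : sub_rmod S, (val w).2 = q'.
  have [q gq] := gsurj (g' q').
  by exists (insubm S (gq : S (q, q'))).
have hsnd : hom (fun w : sub_rmod S => (val w).2) by [].
have [s [hs sK]] := projQ' _ _ _ id hsnd hom_id snd_surj.
have SfK k : S (f k, 0) by rewrite /= (ses_comp0 sfg) (hom0 hg').
have: forall w : sub_rmod S, exists k, (val w).1 - (val (s (val w).2)).1 = f k.
  move=> w; have /ex [k ->] : g ((val w).1 - (val (s (val w).2)).1) = 0.
    by rewrite (homB hg) (valP_submod w) (valP_submod (s _)) sK subrr.
  by exists k.
case/choice => r hr.
apply: (projective_summand _ projW); exists (fun k => insubm S (SfK k)), r; split.
- by move=> a x y; apply: val_inj; apply: (hom_pair hf hom_zero).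
- by move=> a x y; apply: finj; rewrite hf -!hr /= hs scalerBr opprD addrACA.
- by move=> k; apply: finj; rewrite -hr /= (hom0 hs) subr0.
Qed.

Lemma pd_le1_syzygy N K Q (f : K -> Q) (g : Q -> N) :
  pd_le1 N -> ses f g -> projective Q -> projective K.
Proof.
move=> [Q1 [Q0 [f' [g' [projQ1 [projQ0 sfg']]]]]] sfg projQ.
exact: (projective_syzygy sfg sfg' projQ projQ0 projQ1).
Qed.

Lemma pd_le1_pair A B : pd_le1 A -> pd_le1 B -> pd_le1 (A * B)%type.
Proof.
move=> [P1 [P0 [f [g [projP1 [projP0 sfg]]]]]] [P1' [P0' [f' [g' [projP1' [projP0' sfg']]]]]].
exists (P1 * P1')%type, (P0 * P0')%type, (fun a => (f a.1, f' a.2)), (fun b => (g b.1, g' b.2)).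
by split; [|split; [|exact: ses_pair sfg sfg']]; apply: projective_pair.
Qed.

Lemma pd_le1_zero : pd_le1 (zero_rmod R).
Proof.
have projZ : projective (zero_rmod R).
  move=> B C g h hg hh _; exists (fun _ => 0); split; first exact: hom_zero.
  by move=> x; rewrite (hom0 hg) [x]zero_rmod_eq0 (hom0 hh).
exists (zero_rmod R), (zero_rmod R), id, id; do 2!split => //.
split => //; first by move=> c; exists c.
by move=> b; split => _; [exists b | exact: zero_rmod_eq0].
Qed.

(* For K1 = ker (p \o gq) and K2 = gq^-1 (im i), the sequence
   Q1 -> K1 (+) K2 -> Q0, z |-> (fq z, - fq z), (k1, k2) |-> k1 + k2 is exact. *)
Lemma projective_ker_retract V U Q1 Q0 (fq : Q1 -> Q0) (gq : Q0 -> V) (i : U -> V) (p : V -> U)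
    (hgq : hom gq) (hp : hom p) :
  ses fq gq -> projective Q1 -> projective Q0 -> hom i -> (forall u, p (i u) = u) ->
  projective (sub_rmod (ker_submod (hom_comp hgq hp))).
Proof.
move=> sq projQ1 projQ0 hi pi; have [hfq _ fqinj gqsurj exq] := sq.
pose K1 := ker_submod (hom_comp hgq hp).
pose K2 := eq_submod (hom_comp (hom_comp hgq hp) hi) hgq.
have K1fq z : K1 (fq z) by rewrite /= (ses_comp0 sq) (hom0 hp).
have K2fq z : K2 (- fq z) by rewrite /= (homN hgq) (ses_comp0 sq) oppr0 (hom0 hp) (hom0 hi).
pose j z : (sub_rmod K1 * sub_rmod K2)%type := (insubm K1 (K1fq z), insubm K2 (K2fq z)).
pose sum (k : (sub_rmod K1 * sub_rmod K2)%type) := val k.1 + val k.2.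
have sjs : ses j sum.
  split.
  - move=> r x y; congr pair; apply: val_inj => /=; rewrite hfq //.
    by rewrite opprD scalerN.
  - by move=> r x y; rewrite /sum /= scalerDr addrACA.
  - by move=> x y /(congr1 (fun k => val k.1)) /fqinj.
  - move=> q; have [q2 gq2] := gqsurj (i (p (gq q))).
    have K1q : K1 (q - q2) by rewrite /= (homB hgq) gq2 (homB hp) pi subrr.
    have K2q : K2 q2 by rewrite /= gq2 pi.
    by exists (insubm K1 K1q, insubm K2 K2q); rewrite /sum /= subrK.
  move=> [k1 k2]; rewrite /sum /=; split; last first.
    by case=> z [-> ->] /=; rewrite subrr.
  move=> k12; have k2E : val k2 = - val k1 by rewrite -(addKr (val k1) (val k2)) k12 addr0.
  have gk1 : gq (val k1) = 0.
    have := valP_submod k2; rewrite /= k2E (homN hgq) (homN hp) (valP_submod k1).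
    by rewrite oppr0 (hom0 hi) => /esym /eqP; rewrite oppr_eq0 => /eqP.
  have [z k1E] := (exq _).1 gk1; exists z.
  by congr pair; apply: val_inj; rewrite /= -k1E // k2E.
have projK : projective (sub_rmod K1 * sub_rmod K2)%type := projective_ses sjs projQ1 projQ0.
exact: projective_summand (summand_fst _ _) projK.
Qed.

Lemma pd_le1_summand U V : summand U V -> pd_le1 V -> pd_le1 U.
Proof.
move=> [i [p [hi hp pi]]] [Q1 [Q0 [fq [gq [projQ1 [projQ0 sq]]]]]].
have [_ hgq _ gqsurj _] := sq.
exists (sub_rmod (ker_submod (hom_comp hgq hp))), Q0, (fun k => val k), (fun q => p (gq q)).
split; first exact: (projective_ker_retract sq).
split => //; apply: ses_ker => u; have [q gq_iu] := gqsurj (i u).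
by exists q; rewrite gq_iu pi.
Qed.

Lemma pd_le1_coker P D D' (f : P -> D) (g : D -> D') :
  ses f g -> projective P -> pd_le1 D -> pd_le1 D'.
Proof.
move=> sfg projP [Q1 [Q0 [fq [gq [projQ1 [projQ0 sq]]]]]].
have [hf hg finj gsurj ex] := sfg; have [hfq hgq fqinj gqsurj exq] := sq.
pose K := ker_submod (hom_comp hgq hg).
have: forall k : sub_rmod K, exists x, gq (val k) = f x.
  by move=> k; apply/ex/(valP_submod k).
case/choice => r gqr.
have Kfq z : K (fq z) by rewrite /= (ses_comp0 sq) (hom0 hg).
have sK : ses (fun z => insubm K (Kfq z)) r.
  split.
  - by move=> a x y; apply: val_inj; rewrite /= hfq.
  - by move=> a x y; apply: finj; rewrite hf -!gqr /= hgq.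
  - by move=> x y /(congr1 val) /fqinj.
  - move=> x; have [q gqE] := gqsurj (f x).
    have Kq : K q by rewrite /= gqE (ses_comp0 sfg).
    by exists (insubm K Kq); apply: finj; rewrite -gqr /= gqE.
  move=> k; split; last by case=> z ->; apply: finj; rewrite -gqr /= (ses_comp0 sq) !hom0.
  move=> rk0; have /exq [z kE] : gq (val k) = 0 by rewrite gqr rk0 hom0.
  by exists z; apply: val_inj.
exists (sub_rmod K), Q0, (fun k => val k), (fun q => g (gq q)).
split; first exact: (projective_ses sK projQ1 projP).
split => //; apply: ses_ker => d'; have [d <-] := gsurj d'; have [q <-] := gqsurj d.
by exists q.
Qed.

End Projectives.

Section DirectSums.
Variable R : pzRingType.
Implicit Types M N X Y E A B C U V K Q P D W F T : rmod R.

Lemma dsum_unit X : @is_dsum R unit (fun _ => X) X (fun _ x => x).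
Proof.
split=> [_|Z phi hphi]; first exact: hom_id.
split; first by exists (phi tt); split => // -[].
by move=> p1 p2 _ _ e1 e2 m; rewrite (e1 tt) (e2 tt).
Qed.

Definition pair_inj A B (b : bool) : (if b then A else B) -> (A * B)%type :=
  if b as b return (if b then A else B) -> (A * B)%type then fun a => (a, 0) else fun c => (0, c).
Arguments pair_inj {A B} b.

Lemma dsum_pair A B : @is_dsum R bool (fun b => if b then A else B) (A * B)%type (@pair_inj A B).
Proof.
split=> [[]|Z phi hphi]; [exact: hom_inl | exact: hom_inr |].
split.
  exists (fun z => phi true z.1 + phi false z.2); split.
    exact: hom_add (hom_comp hom_fst (hphi true)) (hom_comp hom_snd (hphi false)).
  by case=> x /=; rewrite (hom0 (hphi _)) ?addr0 ?add0r.
move=> p1 p2 hp1 hp2 e1 e2 [a c].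
have -> : (a, c) = pair_inj true a + pair_inj false c.
  by apply: injective_projections; rewrite /= ?addr0 ?add0r.
by rewrite (homD hp1) (homD hp2) !e1 !e2.
Qed.

Lemma dsum_comp I (J : I -> Type) (N : I -> rmod R) M (e : forall i, N i -> M)
    (L : forall i, J i -> rmod R) (e' : forall i j, L i j -> N i) :
  is_dsum e -> (forall i, is_dsum (e' i)) ->
  @is_dsum R {i : I & J i} (fun p => L (projT1 p) (projT2 p)) M
     (fun p x => e (projT1 p) (e' (projT1 p) (projT2 p) x)).
Proof.
move=> [he univ] de'; split=> [[i j]|Z phi hphi]; first by apply: hom_comp (he i); case: (de' i).
have [psi hpsi] := dependent_choice (fun i =>
  (((de' i).2 Z (fun j => phi (existT _ i j)) (fun j => hphi (existT _ i j))).1)).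
have [[Psi [hPsi Psie]] _] := univ Z psi (fun i => (hpsi i).1).
split; first by exists Psi; split => // -[i j] x /=; rewrite Psie (hpsi i).2.
move=> p1 p2 hp1 hp2 e1 e2.
have p12e i x : p1 (e i x) = p2 (e i x).
  have [hei univi] := de' i.
  have [_ uniqi] := univi Z (fun j => phi (existT _ i j)) (fun j => hphi (existT _ i j)).
  apply: (uniqi (fun x => p1 (e i x)) (fun x => p2 (e i x))).
  - exact: hom_comp (he i) hp1.
  - exact: hom_comp (he i) hp2.
  - by move=> j y; apply: (e1 (existT _ i j)).
  - by move=> j y; apply: (e2 (existT _ i j)).
have [_ uniq] := univ Z (fun i x => p1 (e i x)) (fun i => hom_comp (he i) hp1).
by move=> m; apply: uniq => // i x; rewrite p12e.
Qed.

Lemma copies_refl T : copies T T.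
Proof. by exists unit, (fun _ x => x); apply: dsum_unit. Qed.

Lemma copies_pair T A B : copies T A -> copies T B -> copies T (A * B)%type.
Proof.
case=> I [eA dA] [J [eB dB]].
pose e' (b : bool) : forall j : (if b then I else J), T -> (if b then A else B) :=
  if b as b return forall j : (if b then I else J), T -> (if b then A else B) then eA else eB.
exists {b : bool & if b then I else J},
  (fun p x => pair_inj (projT1 p) (e' (projT1 p) (projT2 p) x)).
by apply: (dsum_comp (L := fun _ _ => T) (dsum_pair A B)); case.
Qed.

Lemma in_Add_refl T : in_Add T T.
Proof. by exists T; split; [apply: copies_refl | apply: summand_refl]. Qed.

Lemma in_Add_copies T C : copies T C -> in_Add T C.
Proof. by exists C; split => //; apply: summand_refl. Qed.

Lemma in_Add_summand T X Y : summand X Y -> in_Add T Y -> in_Add T X.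
Proof. by move=> sXY [C [cC sYC]]; exists C; split => //; apply: summand_trans sXY sYC. Qed.

Lemma in_Add_pair T A B : in_Add T A -> in_Add T B -> in_Add T (A * B)%type.
Proof.
move=> [CA [cA sA]] [CB [cB sB]].
by exists (CA * CB)%type; split; [apply: copies_pair | apply: summand_pair].
Qed.

Lemma Ext1_zero_in_Add T X M : in_Add T X -> Ext1_zero T M -> Ext1_zero X M.
Proof.
move=> [C [[I [e de]] sXC]] extT.
by apply: (Ext1_zero_summand sXC); apply: (Ext1_zero_dsum de).
Qed.

Lemma Ext1_zero_in_Add_r T X Y :
  (forall C, copies T C -> Ext1_zero Y C) -> in_Add T X -> Ext1_zero Y X.
Proof. by move=> extC [C [cC sXC]]; apply: Ext1_zero_summand_r sXC (extC C cC). Qed.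

Lemma dsum_proj I (N : I -> rmod R) M (e : forall i, N i -> M) (k : I) :
  is_dsum e -> exists p : M -> N k, [/\ hom p, forall x, p (e k x) = x &
     forall j x, j <> k -> p (e j x) = 0].
Proof.
move=> [he univ].
pose phi (j : I) : N j -> N k := fun x =>
  if excluded_middle_informative (j = k) is left jk then eq_rect j N x k jk else 0.
have hphi j : hom (phi j).
  rewrite /phi; case: excluded_middle_informative => [jk|_]; last exact: hom_zero.
  by case: k / jk phi.
have [[p [hp pe]] _] := univ _ phi hphi.
exists p; split => //.
  move=> x; rewrite pe /phi; case: excluded_middle_informative => // kk.
  by rewrite (proof_irrelevance _ kk erefl).
by move=> j x jk; rewrite pe /phi; case: excluded_middle_informative.
Qed.

Lemma dsum_summand I (N : I -> rmod R) M (e : forall i, N i -> M) (k : I) :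
  is_dsum e -> summand (N k) M.
Proof.
move=> de; have [p [hp pe _]] := dsum_proj k de.
by exists (e k), p; split => //; case: de.
Qed.

Lemma dsum_fin_support I (N : I -> rmod R) M (e : forall i, N i -> M) : is_dsum e ->
  forall m, exists s : seq {i : I & N i}, m = \sum_(x <- s) e (projT1 x) (projT2 x).
Proof.
move=> [he univ].
pose P m := exists s : seq {i : I & N i}, m = \sum_(x <- s) e (projT1 x) (projT2 x).
have P0 : P 0 by exists [::]; rewrite big_nil.
have PD m1 m2 : P m1 -> P m2 -> P (m1 + m2).
  by move=> [s ->] [t ->]; exists (s ++ t); rewrite big_cat.
have PZ r m : P m -> P (r *: m).
  move=> [s ->]; exists [seq existT N (projT1 x) (r *: projT2 x) | x <- s].
  by rewrite big_map scaler_sumr; apply: eq_bigr => -[i x] _; rewrite (homZ (he i)).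
pose S := Submod P0 PD PZ.
have Se i x : S (e i x) by exists [:: existT N i x]; rewrite big_seq1.
have hSe i : hom (fun x => insubm S (Se i x)) by move=> r x y; apply: val_inj; apply: he.
have [[psi [hpsi psie]] _] := univ _ _ hSe.
have [_ uniq] := univ M e he.
move=> m; have <- : val (psi m) = m.
  apply: (uniq (fun m => val (psi m)) id) => //; first exact: hom_comp.
  by move=> i x; rewrite psie.
exact: (valP_submod (psi m)).
Qed.

End DirectSums.

Section FinitelyPresented.
Variable R : pzRingType.
Implicit Types M N X Y E A B C U V K Q P D W F T : rmod R.

Lemma fin_free_RR : fin_free 1 (RR R).
Proof.
exists (fun _ r => r); split=> [_|Z phi hphi]; first exact: hom_id.
split; first by exists (phi ord0); split => // i x; rewrite (ord1 i).
by move=> p1 p2 _ _ e1 e2 m; rewrite (e1 ord0) (e2 ord0).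
Qed.

Lemma fin_free_zero : fin_free 0 (zero_rmod R).
Proof.
exists (fun _ _ => 0); split=> [_|Z phi hphi]; first exact: hom_zero.
split; first by exists (fun _ => 0); split=> [|[]//]; exact: hom_zero.
by move=> p1 p2 hp1 hp2 _ _ m; rewrite [m]zero_rmod_eq0 (hom0 hp1) (hom0 hp2).
Qed.

Definition fin_free_pair_inj m m' F F' (e1 : 'I_m -> RR R -> F) (e2 : 'I_m' -> RR R -> F')
  (k : 'I_(m + m')) (r : RR R) : (F * F')%type :=
  match split k with inl i => (e1 i r, 0) | inr j => (0, e2 j r) end.

Lemma fin_free_pair m m' F F' :
  fin_free m F -> fin_free m' F' -> fin_free (m + m') (F * F')%type.
Proof.
case=> e1 [he1 univ1] [e2 [he2 univ2]].
exists (fin_free_pair_inj e1 e2); split.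
  by move=> k; rewrite /fin_free_pair_inj; case: (split k) => [i|j];
    [exact: hom_comp (he1 i) hom_inl | exact: hom_comp (he2 j) hom_inr].
move=> Z phi hphi.
have [[psi1 [hpsi1 psi1E]] uniq1] := univ1 Z (fun i => phi (lshift m' i)) (fun i => hphi _).
have [[psi2 [hpsi2 psi2E]] uniq2] := univ2 Z (fun j => phi (rshift m j)) (fun j => hphi _).
split.
  exists (fun z => psi1 z.1 + psi2 z.2); split.
    exact: hom_add (hom_comp hom_fst hpsi1) (hom_comp hom_snd hpsi2).
  move=> k x; rewrite -(splitK k) /fin_free_pair_inj unsplitK.
  by case: (split k) => [i|j] /=; rewrite ?psi1E ?psi2E ?(hom0 hpsi1) ?(hom0 hpsi2) ?addr0 ?add0r.
move=> p1 p2 hp1 hp2 p1E p2E [x y].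
have p12l : p1 (x, 0) = p2 (x, 0).
  apply: (uniq1 _ _ (hom_comp hom_inl hp1) (hom_comp hom_inl hp2)) => i a.
    by rewrite -p1E /fin_free_pair_inj (unsplitK (inl i : 'I_m + 'I_m')).
  by rewrite -p2E /fin_free_pair_inj (unsplitK (inl i : 'I_m + 'I_m')).
have p12r : p1 (0, y) = p2 (0, y).
  apply: (uniq2 _ _ (hom_comp hom_inr hp1) (hom_comp hom_inr hp2)) => j a.
    by rewrite -p1E /fin_free_pair_inj (unsplitK (inr j : 'I_m + 'I_m')).
  by rewrite -p2E /fin_free_pair_inj (unsplitK (inr j : 'I_m + 'I_m')).
have -> : (x, y) = (x, 0) + (0, y) by apply: injective_projections; rewrite /= ?addr0 ?add0r.
by rewrite (homD hp1) (homD hp2) p12l p12r.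
Qed.

Lemma fin_pres_zero : fin_pres (zero_rmod R).
Proof.
exists 0%N, 0%N, (zero_rmod R), (zero_rmod R), id, id.
split; try exact: fin_free_zero; try exact: hom_id.
split=> [y|x]; first by exists y.
by split=> _; [exists x | exact: zero_rmod_eq0].
Qed.

Lemma fin_pres_pair A B : fin_pres A -> fin_pres B -> fin_pres (A * B)%type.
Proof.
move=> [m [n [F1 [F0 [f [g [ff1 ff0 hf hg [gsurj ex]]]]]]]].
move=> [m' [n' [F1' [F0' [f' [g' [ff1' ff0' hf' hg' [gsurj' ex']]]]]]]].
exists (m + m')%N, (n + n')%N, (F1 * F1')%type, (F0 * F0')%type,
  (fun z => (f z.1, f' z.2)), (fun z => (g z.1, g' z.2)).
split; try exact: fin_free_pair.
- exact: hom_pair (hom_comp hom_fst hf) (hom_comp hom_snd hf').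
- exact: hom_pair (hom_comp hom_fst hg) (hom_comp hom_snd hg').
split; last exact: exact_pair.
by move=> [c c']; have [b <-] := gsurj c; have [b' <-] := gsurj' c'; exists (b, b').
Qed.

(* D/xR is presented by F1 (+) R -> F0, the new relation being a lift y0 of x. *)
Lemma fin_pres_quo_cyclic D (x : D) : fin_pres D -> fin_pres (quo_rmod (cyclic_submod x)).
Proof.
move=> [m [n [F1 [F0 [f [g [ff1 ff0 hf hg [gsurj ex]]]]]]]].
have [y0 gy0] := gsurj x.
pose pi := quo_pi (cyclic_submod x).
exists (m + 1)%N, n, (F1 * RR R)%type, F0,
  (fun z => f z.1 + (z.2 : R^c) *: y0), (fun w => pi (g w)).
split => //.
- exact: fin_free_pair ff1 fin_free_RR.
- exact: hom_add (hom_comp hom_fst hf) (hom_comp hom_snd (hom_scaler y0)).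
- exact: hom_comp hg (hom_quo_pi _).
split.
  by move=> c; have [d <-] := quo_pi_surj c; have [w <-] := gsurj d; exists w.
move=> w; split.
  move/quo_pi_eq0 => [r rx].
  have : g (w - (r : R^c) *: y0) = 0 by rewrite (homB hg) (homZ hg) gy0 rx subrr.
  by case/ex => z wz; exists (z, r); rewrite /= -wz subrK.
case=> [[z r]] -> /=; apply/quo_pi_eq0; exists r.
have gfz : g (f z) = 0 by apply/ex; exists z.
by rewrite (homD hg) (homZ hg) gy0 gfz add0r.
Qed.

End FinitelyPresented.

Unset Implicit Arguments.
Section FiniteSubsums.
Variables (R : pzRingType) (I : Type) (N : I -> rmod R).

Fixpoint fin_subsum (l : seq I) : rmod R :=
  if l is k :: l' then (N k * fin_subsum l')%type else zero_rmod R.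

Lemma fin_pres_subsum l : (forall i, fin_pres (N i)) -> fin_pres (fin_subsum l).
Proof. by move=> fpN; elim: l => [|k l IH] /=; [exact: fin_pres_zero | exact: fin_pres_pair]. Qed.

Lemma pd_le1_subsum l : (forall i, pd_le1 (N i)) -> pd_le1 (fin_subsum l).
Proof. by move=> pdN; elim: l => [|k l IH] /=; [exact: pd_le1_zero | exact: pd_le1_pair]. Qed.

Section Embedding.
Variables (C : rmod R) (e : forall i, N i -> C) (p : forall i, C -> N i).
Hypotheses (he : forall i, hom (e i)) (hp : forall i, hom (p i))
  (pe : forall i x, p i (e i x) = x) (pe0 : forall j i x, j <> i -> p i (e j x) = 0).

Fixpoint subsum_inj (l : seq I) : fin_subsum l -> C :=
  if l is k :: l' then fun z => e k z.1 + subsum_inj l' z.2 else fun _ => 0.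

Fixpoint subsum_proj (l : seq I) : C -> fin_subsum l :=
  if l is k :: l' then fun c => (p k c, subsum_proj l' c) else fun _ => 0.

Lemma hom_subsum_inj l : hom (subsum_inj l).
Proof.
elim: l => [|k l IH] /=; first exact: hom_zero.
exact: hom_add (hom_comp hom_fst (he k)) (hom_comp hom_snd IH).
Qed.

Lemma hom_subsum_proj l : hom (subsum_proj l).
Proof. by elim: l => [|k l IH] /=; [exact: hom_zero | exact: hom_pair]. Qed.

Lemma subsum_proj_e l i x : ~ List.In i l -> subsum_proj l (e i x) = 0.
Proof.
elim: l => [//|j l IH] /= /Decidable.not_or [ji il].
by rewrite pe0 ?IH // => ij; apply: ji.
Qed.

Lemma p_subsum_inj l i z : ~ List.In i l -> p i (subsum_inj l z) = 0.
Proof.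
elim: l z => [|j l IH] z /=; first by rewrite (hom0 (hp i)).
by case/Decidable.not_or => ji il; rewrite (homD (hp i)) pe0 // IH // add0r.
Qed.

Lemma subsum_projK l : List.NoDup l -> cancel (subsum_inj l) (subsum_proj l).
Proof.
elim: l => [_ z|k l IH /List.NoDup_cons_iff [kl ndl] [a z]] /=; first exact/esym/zero_rmod_eq0.
rewrite (homD (hp k)) pe p_subsum_inj // addr0.
by rewrite (homD (hom_subsum_proj l)) subsum_proj_e // add0r IH.
Qed.

Lemma subsum_injK l i x : List.NoDup l -> List.In i l ->
  subsum_inj l (subsum_proj l (e i x)) = e i x.
Proof.
elim: l => [//|k l IH /List.NoDup_cons_iff [kl ndl]] /= [ki|il].
  by subst i; rewrite pe subsum_proj_e // (hom0 (hom_subsum_inj l)) addr0.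
have ik : i <> k by move=> ik; apply: kl; rewrite -ik.
by rewrite pe0 // (hom0 (he k)) add0r IH.
Qed.
End Embedding.
End FiniteSubsums.
Set Implicit Arguments.

Arguments fin_subsum {R I} N l.
Arguments fin_pres_subsum {R I N} l.
Arguments pd_le1_subsum {R I N} l.
Arguments subsum_inj {R I N C} e l.
Arguments subsum_proj {R I N C} p l.
Arguments hom_subsum_inj {R I N C e} he l.
Arguments hom_subsum_proj {R I N C p} hp l.
Arguments subsum_projK {R I N C e p} hp pe pe0 l.
Arguments subsum_injK {R I N C e p} he pe pe0 l i x.

Lemma dsum_fin_subsum (R : pzRingType) I (N : I -> rmod R) (C : rmod R)
    (e : forall i, N i -> C) (x : C) :
  is_dsum e -> exists (l : seq I) (t : fin_subsum N l -> C) (r : C -> fin_subsum N l),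
    [/\ hom t, hom r, forall d, r (t d) = d & t (r x) = x].
Proof.
move=> de; have he : forall i, hom (e i) by case: de.
have [p hp] := dependent_choice (fun k => dsum_proj k de).
have hpk k : hom (p k) by case: (hp k).
have pe k y : p k (e k y) = y by case: (hp k).
have pe0 j k y : j <> k -> p k (e j y) = 0 by case: (hp k) => _ _; apply.
have [s xE] := dsum_fin_support de x.
pose l := List.nodup (fun i j => excluded_middle_informative (i = j)) (List.map (@projT1 _ _) s).
have ndl : List.NoDup l := List.NoDup_nodup _ _.
have ht := hom_subsum_inj he l; have hr := hom_subsum_proj hpk l.
exists l, (subsum_inj e l), (subsum_proj p l); split => //; first exact: subsum_projK.
suff sumE (s' : seq {i : I & N i}) : (forall y, List.In y s' -> List.In (projT1 y) l) ->
    let z := \sum_(y <- s') e (projT1 y) (projT2 y) in subsum_inj e l (subsum_proj p l z) = z.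
  by rewrite xE; apply: sumE => y ys; apply/List.nodup_In/List.in_map.
elim: s' => [|y s' IH] sl /=; first by rewrite big_nil !hom0.
rewrite big_cons !(homD ht, homD hr) subsum_injK //; last by apply: sl; left.
by rewrite IH // => z zs; apply: sl; right.
Qed.

Section CyclicQuotients.
Variable R : pzRingType.
Implicit Types M N X Y E A B C U V K Q P D W F T : rmod R.

Lemma ses_quo_cyclic D (x : D) : (forall r s : R^c, r *: x = s *: x -> r = s) ->
  ses (fun r : RR R => (r : R^c) *: x) (quo_pi (cyclic_submod x)).
Proof.
move=> xinj; split.
- exact: hom_scaler.
- exact: hom_quo_pi.
- by move=> r s /xinj.
- exact: quo_pi_surj.
by move=> d; rewrite quo_pi_eq0; split=> [[r /= <-]|[r ->]]; exists r.
Qed.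

Lemma summand_quo_cyclic D C (t : D -> C) (r : C -> D) (x : D) :
  hom t -> hom r -> (forall d, r (t d) = d) ->
  summand (quo_rmod (cyclic_submod x)) (quo_rmod (cyclic_submod (t x))).
Proof.
move=> ht hr rt.
pose pi_x := quo_pi (cyclic_submod x); pose pi_tx := quo_pi (cyclic_submod (t x)).
have [t' [ht' t'E]] : exists t', hom t' /\ forall d, t' (pi_x d) = pi_tx (t d).
  apply: quo_lift; first exact: hom_comp ht (hom_quo_pi _).
  by move=> _ [s <-]; apply/quo_pi_eq0; exists s; rewrite /= (homZ ht).
have [r' [hr' r'E]] : exists r', hom r' /\ forall c, r' (pi_tx c) = pi_x (r c).
  apply: quo_lift; first exact: hom_comp hr (hom_quo_pi _).
  by move=> _ [s <-]; apply/quo_pi_eq0; exists s; rewrite /= (homZ hr) rt.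
exists t', r'; split => // a; have [d <-] := quo_pi_surj a.
by rewrite t'E r'E rt.
Qed.

(* With C0 = T0 (+) ker p0 and x = i0 (f 1), C0/xR = T0/f(R) (+) ker p0, and
   T0/f(R) is T1. *)
Lemma summand_quo_cyclic_ses T0 T1 C0 (f : RR R -> T0) (g : T0 -> T1) (i0 : T0 -> C0)
    (p0 : C0 -> T0) :
  ses f g -> hom i0 -> hom p0 -> (forall t, p0 (i0 t) = t) ->
  summand (quo_rmod (cyclic_submod (i0 (f 1)))) (T1 * C0)%type.
Proof.
move=> sfg hi hp pi; have [hf hg _ gsurj ex] := sfg.
pose x := i0 (f 1); pose q := quo_pi (cyclic_submod x).
have hq : hom q := hom_quo_pi _.
have kerg t : g t = 0 -> q (i0 t) = 0.
  move=> /ex [a ->]; apply/quo_pi_eq0; exists a.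
  by rewrite /= /x -(homZ hi) -(homZ hf) -RR_scale1.
have hc : hom (fun c => c - i0 (p0 c)) := hom_sub hom_id (hom_comp hp hi).
have [j [hj jE]] : exists j, hom j /\ forall c, j (q c) = (g (p0 c), c - i0 (p0 c)).
  apply: quo_lift; first exact: hom_pair (hom_comp hp hg) hc.
  move=> _ [s <-]; rewrite /= /x (homZ hp) pi (homZ hg) (homZ hi) (ses_comp0 sfg).
  by apply: injective_projections; rewrite /= ?scaler0 ?subrr.
have [sg sgE] := choice _ gsurj.
exists j, (fun z => q (i0 (sg z.1)) + q (z.2 - i0 (p0 z.2))); split => //.
  apply: hom_add; last exact: hom_comp hom_snd (hom_comp hc hq).
  move=> r a b; apply/eqP; rewrite -(homZ hq) -(homD hq) -subr_eq0 -(homB hq) -!(homZ hi).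
  by rewrite -!(homD hi) -(homB hi) kerg // !(homB hg, homD hg, homZ hg) !sgE /= subrr.
move=> w; have [c <-] := quo_pi_surj w; rewrite jE /=; apply/eqP.
rewrite (homB hp) pi subrr (hom0 hi) subr0 -(homD hq) -subr_eq0 -(homB hq).
rewrite addrCA [c + _]addrC addrK -(homB hi) kerg //.
by rewrite (homB hg) sgE subrr.
Qed.
End CyclicQuotients.

Section PerpGenerated.
Variable R : pzRingType.
Implicit Types M N X Y E A B C U V K Q P D W F T : rmod R.

Lemma Ext1_zero_zero_rmod X : Ext1_zero X (zero_rmod R).
Proof.
move=> E f g [hf hg _ gsurj ex].
have ginj : injective g.
  move=> a b gab; apply/eqP; rewrite -subr_eq0; apply/eqP.
  have /ex [z ->] : g (a - b) = 0 by rewrite (homB hg) gab subrr.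
  by rewrite [z]zero_rmod_eq0 hom0.
have [s gs] := choice _ gsurj.
by exists s; split=> // r x y; apply: ginj; rewrite hg !gs.
Qed.

Lemma Ext1_zero_pair_r N Y1 Y2 :
  pd_le1 N -> Ext1_zero N Y1 -> Ext1_zero N Y2 -> Ext1_zero N (Y1 * Y2)%type.
Proof.
move=> [Q1 [Q0 [fq [gq [_ [projQ0 sq]]]]]] extY1 extY2.
apply: (Ext1_zero_of_extend sq projQ0) => h hh.
have [h1 [hh1 h1E]] := Ext1_zero_extend sq extY1 (hom_comp hh hom_fst).
have [h2 [hh2 h2E]] := Ext1_zero_extend sq extY2 (hom_comp hh hom_snd).
exists (fun q => (h1 q, h2 q)); split; first exact: hom_pair.
by move=> k; rewrite h1E h2E; case: (h k).
Qed.

Definition perp_generated N M (y : M) := exists (Y : rmod R) (phi : Y -> M) (z : Y),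
  [/\ hom phi, Ext1_zero N Y & phi z = y].

Lemma perp_generated0 N M : perp_generated N (0 : M).
Proof.
exists (zero_rmod R), (fun _ => 0), 0; split => //; first exact: hom_zero.
exact: Ext1_zero_zero_rmod.
Qed.

Lemma perp_generatedD N M (y1 y2 : M) : pd_le1 N ->
  perp_generated N y1 -> perp_generated N y2 -> perp_generated N (y1 + y2).
Proof.
move=> pdN [Y1 [phi1 [z1 [hphi1 ext1 <-]]]] [Y2 [phi2 [z2 [hphi2 ext2 <-]]]].
exists (Y1 * Y2)%type, (fun w => phi1 w.1 + phi2 w.2), (z1, z2); split => //.
  exact: hom_add (hom_comp hom_fst hphi1) (hom_comp hom_snd hphi2).
exact: Ext1_zero_pair_r.
Qed.

Lemma perp_generated_sum N M I (s : seq I) (F : I -> M) : pd_le1 N ->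
  (forall i, perp_generated N (F i)) -> perp_generated N (\sum_(i <- s) F i).
Proof.
move=> pdN genF; elim: s => [|i s IH]; first by rewrite big_nil; apply: perp_generated0.
by rewrite big_cons; apply: perp_generatedD.
Qed.

Lemma perp_cover_seq N M (s : seq M) : pd_le1 N -> (forall y : M, perp_generated N y) ->
  exists (Y : rmod R) (phi : Y -> M) (hphi : hom phi),
    Ext1_zero N Y /\ forall y, y \in s -> img_submod hphi y.
Proof.
move=> pdN genM; elim: s => [|a s [Y [phi [hphi [extY covY]]]]].
  exists (zero_rmod R), (fun _ => 0), hom_zero; split=> //.
  exact: Ext1_zero_zero_rmod.
have [Y1 [phi1 [z1 [hphi1 ext1 phiz1]]]] := genM a.
have hpsi : hom (fun w : (Y1 * Y)%type => phi1 w.1 + phi w.2).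
  exact: hom_add (hom_comp hom_fst hphi1) (hom_comp hom_snd hphi).
exists (Y1 * Y)%type, _, hpsi; split; first exact: Ext1_zero_pair_r.
move=> y; rewrite inE => /orP [/eqP ->|/covY [z <-]].
  by exists (z1, 0); rewrite /= (hom0 hphi) addr0.
by exists (0, z); rewrite /= (hom0 hphi1) add0r.
Qed.

(* The syzygy K of N is projective and generated by the images of a basis of F1,
   so a map h : K -> M lands in the image of a single Y in N^perp, lifts to Y,
   and then extends to F0 since Ext(N, Y) = 0. *)
Lemma Ext1_zero_of_perp_generated N M : fin_pres N -> pd_le1 N ->
  (forall y : M, perp_generated N y) -> Ext1_zero N M.
Proof.
move=> [m [n [F1 [F0 [f [g [[e1 de1] ff0 hf hg [gsurj ex]]]]]]]] pdN genM.
have he1 l : hom (e1 l) by case: de1.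
pose K := ker_submod hg.
have sK := ses_ker hg gsurj.
have projF0 := projective_fin_free ff0.
have projK := pd_le1_syzygy pdN sK projF0.
apply: (Ext1_zero_of_extend sK projF0) => h hh.
have Kf z : K (f z) by apply/ex; exists z.
pose kk l := insubm K (Kf (e1 l 1)).
have [Y [phi [hphi [extY covY]]]] := perp_cover_seq [seq h (kk l) | l <- enum 'I_m] pdN genM.
pose S := img_submod hphi.
have Sh k : S (h k).
  have /ex [z kz] := valP_submod k; have [s zs] := dsum_fin_support de1 z.
  have -> : k = \sum_(x <- s) (projT2 x : R^c) *: kk (projT1 x).
    apply: val_inj; rewrite kz zs (hom_sum _ _ hf) (hom_sum _ _ (@hom_val _ _ K)).
    by apply: eq_bigr => -[l c] _; rewrite /= [c in e1 l c]RR_scale1 (homZ (he1 l)) (homZ hf).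
  rewrite (hom_sum _ _ hh); apply: submod_sum => -[l c]; rewrite (homZ hh).
  by apply/submodZ/covY/map_f; rewrite mem_enum.
pose h' k : sub_rmod S := insubm S (Sh k).
have hh' : hom h' by move=> r x y; apply: val_inj; apply: hh.
have Sphi y : S (phi y) by exists y.
pose phi' y : sub_rmod S := insubm S (Sphi y).
have hphi' : hom phi' by move=> r x y; apply: val_inj; apply: hphi.
have phi'_surj (w : sub_rmod S) : exists y, phi' y = w.
  by have [y phiy] := valP_submod w; exists y; apply: val_inj.
have [lam [hlam lamE]] := projK _ _ phi' h' hphi' hh' phi'_surj.
have [lam' [hlam' lam'E]] := Ext1_zero_extend sK extY hlam.
exists (fun w => phi (lam' w)); split; first exact: hom_comp.
by move=> k; rewrite lam'E; have := congr1 val (lamE k).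
Qed.

End PerpGenerated.

Section DirectSumOfFinitelyPresented.
Variables (R : pzRingType) (I : Type) (N : I -> rmod R) (T : rmod R) (eT : forall i, N i -> T).
Hypotheses (dT : is_dsum eT) (fpN : forall i, fin_pres (N i)) (pdT : pd_le1 T).

Lemma pd_le1_dsum_component i : pd_le1 (N i).
Proof. exact: pd_le1_summand (dsum_summand i dT) pdT. Qed.

Lemma Ext1_zero_of_perp_generated_dsum (M : rmod R) :
  (forall y : M, perp_generated T y) -> Ext1_zero T M.
Proof.
move=> genM; apply: (Ext1_zero_dsum dT) => i.
apply: (Ext1_zero_of_perp_generated (fpN i) (pd_le1_dsum_component i)) => y.
have [Y [phi [z [hphi extY phiz]]]] := genM y.
by exists Y, phi, z; split => //; apply: Ext1_zero_summand (dsum_summand i dT) extY.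
Qed.

Lemma Ext1_zero_dsum_r J (L : J -> rmod R) (X : rmod R) (e : forall j, L j -> X) :
  is_dsum e -> (forall j, Ext1_zero T (L j)) -> Ext1_zero T X.
Proof.
move=> de extL; apply: Ext1_zero_of_perp_generated_dsum => y.
have [s ->] := dsum_fin_support de y; apply: perp_generated_sum pdT _ => -[j z].
by exists (L j), (e j), z; split => //; case: de.
Qed.

End DirectSumOfFinitelyPresented.

Section ClassicalTilting.
Variables (R : pzRingType) (I : Type) (N : I -> rmod R) (T : rmod R) (eT : forall i, N i -> T).
Hypotheses (dT : is_dsum eT) (fpN : forall i, fin_pres (N i)) (tT : tilting1 T).

Lemma tilting_fin_pres_ses : exists (D Dq : rmod R) (fD : RR R -> D) (gD : D -> Dq),
  ses fD gD /\ [/\ fin_pres D, fin_pres Dq, pd_le1 D, in_Add T D & in_Add T Dq].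
Proof.
have [pdT _ [T0 [T1 [f [g [[C0 [cC0 sT0C0]] addT1 sfg]]]]]] := tT.
have [J [eC0 dC0]] := cC0; have [i0 [p0 [hi0 hp0 p0i0]]] := sT0C0.
have [hf _ finj _ _] := sfg.
have dN := dsum_comp dC0 (fun _ => dT).
have [l [t [r [ht hr rt trx]]]] := dsum_fin_subsum (i0 (f 1)) dN.
pose x := r (i0 (f 1)).
have x_inj (a b : R^c) : a *: x = b *: x -> a = b.
  move=> /(congr1 (fun d => p0 (t d))); rewrite !(homZ ht) trx !(homZ hp0) p0i0.
  by rewrite -!(homZ hf) => /finj; rewrite -!RR_scale1.
exists _, (quo_rmod (cyclic_submod x)), (fun a : RR R => (a : R^c) *: x), (quo_pi _).
split; first exact: ses_quo_cyclic x_inj.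
have fpD := fin_pres_subsum l (fun k => fpN (projT2 k)).
split.
- exact: fpD.
- exact: fin_pres_quo_cyclic fpD.
- by apply: pd_le1_subsum => k; exact: (pd_le1_dsum_component dT pdT (projT2 k)).
- by apply: in_Add_summand (in_Add_copies cC0); exists t, r.
apply: in_Add_summand (in_Add_pair addT1 (in_Add_copies cC0)).
apply: summand_trans (summand_quo_cyclic _ ht hr rt) _; rewrite trx.
exact: summand_quo_cyclic_ses sfg hi0 hp0 p0i0.
Qed.

Lemma classical_of_fin_pres_ses (D Dq : rmod R) (fD : RR R -> D) (gD : D -> Dq) :
  ses fD gD -> fin_pres D -> fin_pres Dq -> pd_le1 D -> in_Add T D -> in_Add T Dq ->
  classical T.
Proof.
move=> sD fpD fpDq pdD addD addDq; have [pdT extT _] := tT.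
pose U := (D * Dq)%type.
have addU : in_Add T U := in_Add_pair addD addDq.
have perpTU M : Ext1_zero T M -> Ext1_zero U M := Ext1_zero_in_Add addU.
have perpUT M : Ext1_zero U M -> Ext1_zero T M.
  move=> extU; apply: (Ext1_zero_of_perp_generated_dsum dT fpN pdT) => y.
  have extDq : Ext1_zero Dq M := Ext1_zero_summand (summand_snd D Dq) extU.
  have [phi [hphi phiE]] := Ext1_zero_extend sD extDq (hom_scaler y).
  exists D, phi, (fD 1); split => //; first exact: Ext1_zero_in_Add_r extT addD.
  by rewrite phiE scale1r.
exists U; split => //; last by move=> M; split; [apply: perpTU | apply: perpUT].
- exact: fin_pres_pair.
split.
- exact: (pd_le1_pair pdD (pd_le1_coker sD (@projective_RR R) pdD)).
- move=> X [J [e de]]; apply: perpTU; apply: (Ext1_zero_dsum_r dT fpN pdT de) => _.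
  exact: Ext1_zero_in_Add_r extT addU.
exists D, Dq, fD, gD; split => //.
  exact: in_Add_summand (summand_fst D Dq) (in_Add_refl U).
exact: in_Add_summand (summand_snd D Dq) (in_Add_refl U).
Qed.

End ClassicalTilting.

Theorem corollary2p8 (R : pzRingType) :
  (forall P : rmod R, pure_projective P -> dsum_fin_pres P) ->
  forall T : rmod R, pure_projective T -> tilting1 T -> classical T.
Proof.
move=> dsumP T ppT tT; have [I [N [eT [fpN dT]]]] := dsumP T ppT.
have [D [Dq [fD [gD [sD [fpD fpDq pdD addD addDq]]]]]] := tilting_fin_pres_ses dT fpN tT.
exact: (classical_of_fin_pres_ses dT fpN tT sD fpD fpDq pdD addD addDq).
Qed.
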